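(* Let $G=(V,E)$ be an undirected graph with $n=|V|$ nodes and let $f$ be an integer with $0<f<n$. If there exists an algorithm that solves $\epsilon$-approximate Byzantine consensus on $G$ in the asynchronous local broadcast model tolerating at most $f$ Byzantine faulty nodes, then $n \ge 3f+1$.
   Context: Communication network: an undirected graph $G=(V,E)$ known to every node; each edge is a reliable FIFO link, and a receiver knows the identity of the sender of each message. Local broadcast model: every message sent by a node $u$ is received identically and correctly by all neighbors of $u$ (so a node cannot send different messages to different neighbors). Asynchrony: nodes proceed at arbitrary speeds with no global clock, and every message is delivered after an unbounded but finite delay. At most $f$ nodes are Byzantine faulty and may behave arbitrarily, subject to the local broadcast constraint (in particular a faulty node may crash, i.e. take no steps). $\epsilon$-approximate Byzantine consensus: there are known reals $L<U$ and $\epsilon$ with $U-L>\epsilon>0$; each node starts with a real input in $[L,U]$ and must output a real value such that (1) $\epsilon$-Agreement: the outputs of any two non-faulty nodes differ by at most $\epsilon$; (2) Validity: each non-faulty node's output lies in the convex hull of the inputs of the non-faulty nodes; (3) Termination: every non-faulty node decides its output within finite time (which may depend on $U$, $L$, $\epsilon$). Once a node terminates it takes no further steps. *)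

From Stdlib Require Import Reals.
From mathcomp Require Import all_boot.

Set Implicit Arguments.
Unset Strict Implicit.
Unset Printing Implicit Defensive.

Local Open Scope R_scope.

Section Model.

Variable n : nat.
Variable adj : rel 'I_n.

(** A (deterministic, event-driven) distributed algorithm with local state
    type [S] and message type [M].  Every node knows the graph and its own
    identity (the algorithm is chosen after the graph, n, f, L, U, eps).
    - [init u x] : initial state of node [u] with input [x], together with the
      messages it broadcasts at start;
    - [step u s v m] : node [u] in state [s] receives message [m] from
      neighbour [v] (the receiver knows the sender); returns the new state and
      the messages it broadcasts (each broadcast goes to all neighbours);
    - [decision s] : [Some y] iff the node has decided (output) [y]; a node
      that has decided takes no further steps. *)
Record algorithm (S M : Type) := Algorithm {
  init : 'I_n -> R -> S * seq M;
  step : 'I_n -> S -> 'I_n -> M -> S * seq M;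
  decision : S -> option R
}.

Variables (S M : Type) (A : algorithm S M).

(** Global configuration: local states, and for every ordered pair (v, u)
    the FIFO queue of messages sent by v not yet delivered to u. *)
Record config := Config {
  cst : 'I_n -> S;
  chan : 'I_n -> 'I_n -> seq M
}.

Inductive event :=
  | Deliver of 'I_n & 'I_n   (* Deliver u v : u receives the head of chan v u *)
  | FaultySend of 'I_n & M.

Definition decided (s : S) : bool := if decision A s is Some _ then true else false.

(** Local broadcast: node [u] appends [ms] to the queues towards all of its
    neighbours (identically). *)
Definition bcast (q : 'I_n -> 'I_n -> seq M) (u : 'I_n) (ms : seq M) :=
  fun a b => if (a == u) && adj u b then q a b ++ ms else q a b.

Definition upd_state (st : 'I_n -> S) (u : 'I_n) (s : S) :=
  fun w => if w == u then s else st w.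

Definition upd_chan (q : 'I_n -> 'I_n -> seq M) (v u : 'I_n) (l : seq M) :=
  fun a b => if (a == v) && (b == u) then l else q a b.

Definition next (F : {set 'I_n}) (c : config) (e : event) : config :=
  match e with
  | Deliver u v =>
      match chan c v u with
      | [::] => c
      | m :: rest =>
          let q' := upd_chan (chan c) v u rest in
          if (u \in F) || decided (cst c u) then Config (cst c) q'
          else let (s', ms) := step A u (cst c u) v m in
               Config (upd_state (cst c) u s') (bcast q' u ms)
      end
  | FaultySend v m =>
      if v \in F then Config (cst c) (bcast (chan c) v [:: m]) else c
  end.

(** Initial configuration for inputs [x]: non-faulty nodes have broadcast
    their initial messages; faulty nodes send only via [FaultySend]. *)
Definition init_config (F : {set 'I_n}) (x : 'I_n -> R) : config :=
  Config (fun u => fst (init A u (x u)))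
         (fun a b => if (a \notin F) && adj a b then snd (init A a (x a)) else [::]).

Fixpoint run (F : {set 'I_n}) (x : 'I_n -> R) (sch : nat -> event) (t : nat)
  : config :=
  match t with
  | 0 => init_config F x
  | t'.+1 => next F (run F x sch t') (sch t')
  end.

Definition fair (F : {set 'I_n}) (x : 'I_n -> R) (sch : nat -> event) : Prop :=
  forall t u v, u \notin F -> chan (run F x sch t) v u <> [::] ->
    exists t', (t <= t')%N /\ sch t' = Deliver u v.

Definition output_at (F : {set 'I_n}) (x : 'I_n -> R) (sch : nat -> event) (t : nat) (u : 'I_n) : option R := decision A (cst (run F x sch t) u).

Definition correct_exec (eps : R) (F : {set 'I_n}) (x : 'I_n -> R) (sch : nat -> event) : Prop :=
  (forall u, u \notin F -> exists t y, output_at F x sch t u = Some y) /\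
  (forall u v t t' yu yv, u \notin F -> v \notin F ->
     output_at F x sch t u = Some yu -> output_at F x sch t' v = Some yv ->
     (Rabs (yu - yv) <= eps)%R) /\
  (* Validity: output in the convex hull (an interval) of non-faulty inputs *)
  (forall u t y, u \notin F -> output_at F x sch t u = Some y ->
     exists a b, a \notin F /\ b \notin F /\ (x a <= y <= x b)%R).

Definition solves (f : nat) (L U eps : R) : Prop :=
  forall (x : 'I_n -> R), (forall u, (L <= x u <= U)%R) ->
  forall (F : {set 'I_n}), (#|F| <= f)%N ->
  forall sch : nat -> event, fair F x sch -> correct_exec eps F x sch.

End Model.

From Pilot Require Import Defs.
(* Suppose n <= 3f and split the nodes into blocks As, Cs, Bs of at most f nodes each.
   Run the algorithm with Bs crashed, inputs U on Cs and L elsewhere, and round-robin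
   delivery; some a0 in As and c0 in Cs decide.  Node a0 cannot distinguish this run
   from one with all inputs L, Bs correct but slow (its messages held back until a0
   has decided) and Cs Byzantine, broadcasting up front every message it sends in the
   first run; by validity a0 decides L.  Symmetrically c0 decides U, and U - L > eps
   contradicts eps-agreement. *)
From Stdlib Require Import Reals Lra.
From mathcomp Require Import all_boot zify.

Set Implicit Arguments.
Unset Strict Implicit.
Unset Printing Implicit Defensive.

Section Simulation.

Variables (n : nat) (adj : rel 'I_n) (S M : Type) (A : algorithm n S M).
Hypothesis adj_irr : irreflexive adj.

Notation cfg := (config n S M).
Notation next := (Defs.next adj A).
Notation run := (Defs.run adj A).

Definition no_self_chan (c : cfg) : Prop := forall w, chan c w w = [::].

Definition silent (F : {set 'I_n}) (c : cfg) : Prop :=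
  forall b w, b \in F -> chan c b w = [::].

Definition deliveries_only (sch : nat -> event n M) : Prop :=
  forall t, exists u v, sch t = Deliver M u v.

Lemma upd_chan_nil (q : 'I_n -> 'I_n -> seq M) v u m rest a b :
  q v u = m :: rest -> q a b = [::] -> upd_chan q v u rest a b = [::].
Proof.
rewrite /upd_chan => Evu Eab; case: ifP => [/andP[/eqP Hv /eqP Hu]|_] //.
by move: Evu; rewrite -Hv -Hu Eab.
Qed.

Lemma no_self_chan_next F (c : cfg) e : no_self_chan c -> no_self_chan (next F c e).
Proof.
move=> H w.
have bcast_self (q : 'I_n -> 'I_n -> seq M) u ms :
    q w w = [::] -> bcast adj q u ms w w = [::].
  by rewrite /bcast; case: ifP => [/andP[/eqP -> ]|_]; rewrite ?adj_irr.
case: e => [u v|v m] /=; last by case: ifP => _ //=; apply: bcast_self.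
case E: (chan c v u) => [|m rest] //.
have Hq := upd_chan_nil E (H w).
case: ifP => _ //=; case: (step A u (cst c u) v m) => s' ms /=.
exact: bcast_self.
Qed.

Lemma no_self_chan_run F x sch t : no_self_chan (run F x sch t).
Proof.
elim: t => [|t IH] /=; last exact: no_self_chan_next.
by move=> w /=; rewrite adj_irr andbF.
Qed.

Lemma next_deliver_self F (c : cfg) w : chan c w w = [::] -> next F c (Deliver M w w) = c.
Proof. by move=> /= ->. Qed.

Lemma silent_next_deliver F (c : cfg) u v :
  silent F c -> silent F (next F c (Deliver M u v)).
Proof.
move=> H b w bF /=; case E: (chan c v u) => [|m rest]; first exact: H.
have Hq := upd_chan_nil E (H b w bF).
case: ifP => uF //=; case: (step A u (cst c u) v m) => s' ms /=.
by rewrite /bcast; case: ifP => [/andP[/eqP Hb _]|_] //; move: uF; rewrite -Hb bF.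
Qed.

Lemma silent_run F x sch : deliveries_only sch -> forall t, silent F (run F x sch t).
Proof.
move=> Hsch; elim=> [|t IH] /=; first by move=> b w /= ->.
by have [u [v ->]] := Hsch t; exact: silent_next_deliver.
Qed.

Definition pending (Cs : {set 'I_n}) (D : 'I_n -> seq M) (a b : 'I_n) : seq M :=
  if (a \in Cs) && adj a b then D a else [::].

Definition emitted (F : {set 'I_n}) (c : cfg) (e : event n M) (w : 'I_n) : seq M :=
  if e is Deliver u v then
    if chan c v u is m :: _ then
      if (w == u) && ~~ ((u \in F) || decided A (cst c u))
      then (step A u (cst c u) v m).2 else [::]
    else [::]
  else [::].

(* Deliveries to the correct but slow nodes of [Bs] are postponed;
   [Deliver M u u] is a no-op since self-channels are empty. *)
Definition mimic (Bs : {set 'I_n}) (c : cfg) (e : event n M) : event n M :=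
  if e is Deliver u v then
    if (u \notin Bs) && ~~ nilp (chan c v u) then e else Deliver M u u
  else e.

Definition faulty_sends (w : 'I_n) (l : seq M) : seq (event n M) :=
  [seq FaultySend w m | m <- l].

Definition presend (Cs : {set 'I_n}) (Sq : 'I_n -> seq M) : seq (event n M) :=
  flatten [seq faulty_sends w (Sq w) | w <- enum Cs].

Lemma foldl_next_faulty_sends (F : {set 'I_n}) (c : cfg) w (l : seq M) : w \in F ->
  let c' := foldl (next F) c (faulty_sends w l) in
  cst c' = cst c /\
  forall a b, chan c' a b = chan c a b ++ (if (a == w) && adj w b then l else [::]).
Proof.
move=> wF; elim: l c => [|m l IH] c /=.
  by split=> // a b; case: ifP; rewrite cats0.
rewrite wF; have [-> Hch] := IH (Config (cst c) (bcast adj (chan c) w [:: m])).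
split=> // a b; rewrite Hch /= /bcast; case: ifP => //; by rewrite -catA.
Qed.

Lemma foldl_next_sends (F : {set 'I_n}) (c : cfg) (ws : seq 'I_n) (Sq : 'I_n -> seq M) :
  uniq ws -> {subset ws <= F} ->
  let c' := foldl (next F) c (flatten [seq faulty_sends w (Sq w) | w <- ws]) in
  cst c' = cst c /\
  forall a b, chan c' a b = chan c a b ++ (if (a \in ws) && adj a b then Sq a else [::]).
Proof.
elim: ws c => [|w ws IH] c /=; first by split=> // a b; rewrite cats0.
move=> /andP[wNws uws] sub; rewrite foldl_cat.
have [Hst1 Hch1] := foldl_next_faulty_sends c (Sq w) (sub w (mem_head _ _)).
have [|Hst2 Hch2] := IH (foldl (next F) c (faulty_sends w (Sq w))) uws.
  by move=> z zws; apply: sub; rewrite inE zws orbT.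
rewrite Hst2 Hst1; split=> // a b; rewrite Hch2 Hch1 inE.
have [->|naw] := eqVneq a w; last by rewrite cats0.
by rewrite (negbTE wNws) /=; case: ifP; rewrite ?cats0.
Qed.

Lemma run_prefix (F : {set 'I_n}) x sch (P : seq (event n M)) d :
  (forall i, i < size P -> sch i = nth d P i) ->
  run F x sch (size P) = foldl (next F) (init_config adj A F x) P.
Proof.
elim/last_ind: P => [|P e IH] H //.
rewrite size_rcons /= foldl_rcons IH => [|i iP]; last first.
  by rewrite H ?nth_rcons ?iP // size_rcons ltnS ltnW.
by rewrite H ?nth_rcons ?ltnn ?eqxx // size_rcons ltnSn.
Qed.

Lemma run_presend (Cs : {set 'I_n}) val sch (Sq : 'I_n -> seq M) d :
  (forall i, i < size (presend Cs Sq) -> sch i = nth d (presend Cs Sq) i) ->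
  let c0 := init_config adj A Cs (fun _ => val) in
  let r := run Cs (fun _ => val) sch (size (presend Cs Sq)) in
  cst r = cst c0 /\ forall a b, chan r a b = chan c0 a b ++ pending Cs Sq a b.
Proof.
move=> Hsch c0 r; rewrite /r (run_prefix _ _ Hsch).
have [|Hst Hch] := @foldl_next_sends Cs c0 (enum Cs) Sq (enum_uniq _).
  by move=> z; rewrite mem_enum.
by split=> // a b; rewrite Hch mem_enum.
Qed.

Fixpoint sent (F : {set 'I_n}) x sch t (w : 'I_n) : seq M :=
  if t is t'.+1 then sent F x sch t' w ++ emitted F (run F x sch t') (sch t') w
  else (init A w (x w)).2.

Lemma sent_prefix (F : {set 'I_n}) x sch t t' w :
  t <= t' -> exists s, sent F x sch t' w = sent F x sch t w ++ s.
Proof.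
move=> /subnKC <-; elim: (t' - t) => [|k [s Hs]]; first by exists [::]; rewrite addn0 cats0.
by exists (s ++ emitted F (run F x sch (t + k)) (sch (t + k)) w); rewrite addnS /= Hs catA.
Qed.

Section Step.

Variables Bs Cs : {set 'I_n}.

(* [r] runs with [Bs] faulty, [r'] with [Cs] faulty, and [D w] is what the
   Byzantine node [w \in Cs] has broadcast ahead of time in [r'] but not yet in [r]. *)
Definition simulates (r r' : cfg) (D : 'I_n -> seq M) : Prop :=
  (forall a, a \notin Bs -> a \notin Cs -> cst r' a = cst r a) /\
  (forall a b, a \notin Bs -> b \notin Bs -> chan r' a b = chan r a b ++ pending Cs D a b).

Lemma simulates_eq_pending r r' D D1 :
  (forall w, w \in Cs -> D w = D1 w) -> simulates r r' D -> simulates r r' D1.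
Proof.
move=> HD [Hst Hch]; split=> // a b aB bB; rewrite Hch // /pending.
by case: ifP => // /andP[aC _]; rewrite HD.
Qed.

Lemma next_mimic_idle r r' D u v :
  no_self_chan r' -> (u \in Bs) || nilp (chan r v u) -> simulates r r' D ->
  simulates (next Bs r (Deliver M u v)) (next Cs r' (Deliver M u u)) D.
Proof.
move=> self' idle [Hst Hch]; rewrite next_deliver_self // /simulates /=.
case E: (chan r v u) idle => [|m rest] //= /orP[uB|//]; rewrite uB /=.
split=> // a b aB bB.
rewrite Hch // /upd_chan; case: ifP => // /andP[_ /eqP Hbu].
by move: bB; rewrite Hbu uB.
Qed.

Lemma next_mimic_deliver r r' D D1 u v m rest :
  u \notin Bs -> v \notin Bs -> chan r v u = m :: rest ->
  (forall w, w \in Cs -> D w = emitted Bs r (Deliver M u v) w ++ D1 w) ->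
  simulates r r' D ->
  simulates (next Bs r (Deliver M u v)) (next Cs r' (Deliver M u v)) D1.
Proof.
move=> uB vB E HD [Hst Hch].
set q := upd_chan (chan r) v u rest.
set q' := upd_chan (chan r') v u (rest ++ pending Cs D v u).
have Hq a b : a \notin Bs -> b \notin Bs -> q' a b = q a b ++ pending Cs D a b.
  move=> aB bB; rewrite /q /q' /upd_chan.
  by case: ifP => [/andP[/eqP -> /eqP ->]|_]; rewrite ?catA // Hch.
have Hemit : emitted Bs r (Deliver M u v) =1 fun w =>
    if (w == u) && ~~ decided A (cst r u) then (step A u (cst r u) v m).2 else [::].
  by move=> w; rewrite /emitted E (negbTE uB).
rewrite /= Hch // E (negbTE uB) /= -/q'.
case uC: (u \in Cs) => /=; last rewrite Hst ?uB ?uC //.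
- case dec: (decided A (cst r u)) => /=.
    apply: (@simulates_eq_pending _ _ D) => [w wC|]; first by rewrite HD // Hemit dec andbF.
    by split=> // a b aB bB; rewrite Hq.
  case Est: (step A u (cst r u) v m) => [s' ms] /=; split.
    move=> a aB aC; rewrite /upd_state /=; case: eqP => [Hau|_]; last exact: Hst.
    by move: aC; rewrite Hau uC.
  move=> a b aB bB /=; rewrite (Hq _ _ aB bB) /bcast /pending.
  case: (eqVneq a u) => [->|nau] /=.
    by rewrite uC HD // Hemit eqxx dec Est; case: (adj u b); rewrite ?catA ?cats0.
  by case: ifP => // /andP[aC _]; rewrite HD // Hemit (negbTE nau).
- have HD1 : forall w, w \in Cs -> D w = D1 w.
    by move=> w wC; rewrite HD // Hemit; case: eqP => [Hwu|] //; move: uC; rewrite -Hwu wC.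
  case dec: (decided A (cst r u)) => /=.
    by apply: (simulates_eq_pending HD1); split=> // a b aB bB; rewrite Hq.
  case Est: (step A u (cst r u) v m) => [s' ms] /=; split.
    by move=> a aB aC; rewrite /upd_state /=; case: eqP => // _; exact: Hst.
  move=> a b aB bB /=; rewrite /bcast (Hq _ _ aB bB).
  case: ifP => [/andP[/eqP -> _]|_]; last by rewrite /pending; case: ifP => // /andP[/HD1 ->].
  by rewrite /pending uC /= !cats0.
Qed.

Lemma next_mimic r r' D D1 u v :
  silent Bs r -> no_self_chan r' ->
  (forall w, w \in Cs -> D w = emitted Bs r (Deliver M u v) w ++ D1 w) ->
  simulates r r' D ->
  simulates (next Bs r (Deliver M u v)) (next Cs r' (mimic Bs r (Deliver M u v))) D1.
Proof.
move=> quiet self' HD sim; rewrite /mimic.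
case Evu: (chan r v u) HD => [|m rest] HD; last case: ifP => [/andP[uB _]|/negbT/nandP[/negbNE uB|//]].
- rewrite andbF; apply: next_mimic_idle => //; first by apply/orP; right; apply/nilP.
  apply: (simulates_eq_pending _ sim) => w wC; by rewrite HD // /emitted Evu.
- have vB : v \notin Bs by apply/negP => /(quiet _ u); rewrite Evu.
  exact: (next_mimic_deliver uB vB Evu HD).
- apply: next_mimic_idle; rewrite ?uB //.
  by apply: (simulates_eq_pending _ sim) => w wC; rewrite HD // /emitted Evu uB andbF.
Qed.

Lemma simulates_run x val sch sch' t1 d :
  deliveries_only sch -> (forall a, a \notin Bs -> a \notin Cs -> x a = val) ->
  let P := presend Cs (sent Bs x sch t1) in
  (forall i, i < size P -> sch' i = nth d P i) ->
  (forall t, t < t1 -> sch' (size P + t) = mimic Bs (run Bs x sch t) (sch t)) ->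
  forall t, t <= t1 ->
  simulates (run Bs x sch t) (run Cs (fun _ => val) sch' (size P + t))
    (fun w => drop (size (sent Bs x sch t w)) (sent Bs x sch t1 w)).
Proof.
move=> Hsch hx P Hpre Hmim; elim=> [|t IH] tt1.
  have [Hst Hch] := run_presend val Hpre; rewrite addn0; split.
    by move=> a aB aC; rewrite Hst /= hx.
  move=> a b aB bB; rewrite Hch /= /pending (negbTE aB) /=.
  case aC: (a \in Cs) => /=; last by rewrite hx ?aC // cats0.
  case: ifP => // _; have [s ->] := sent_prefix Bs x sch a (leq0n t1).
  by rewrite drop_size_cat.
rewrite addnS /= Hmim //; have [u [v Hsv]] := Hsch t; rewrite Hsv.
apply: next_mimic (IH (ltnW tt1)); [exact: silent_run | exact: no_self_chan_run |].
move=> w wC; have [s ->] := sent_prefix Bs x sch w tt1.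
rewrite /= Hsv -catA drop_size_cat //.
by rewrite catA drop_size_cat.
Qed.

Lemma crash_simulation x val sch t1 :
  deliveries_only sch -> (forall a, a \notin Bs -> a \notin Cs -> x a = val) ->
  exists sch' T, (forall t, T <= t -> sch' t = sch t) /\
    forall a, a \notin Bs -> a \notin Cs ->
      cst (run Cs (fun _ => val) sch' T) a = cst (run Bs x sch t1) a.
Proof.
(* Cs first broadcasts all it will have sent up to [t1] in the Bs-faulty run,
   then that run's schedule is replayed. *)
move=> Hsch hx; pose P := presend Cs (sent Bs x sch t1); pose k := size P.
pose sch' t := if t < k then nth (sch 0) P t
  else if t < k + t1 then mimic Bs (run Bs x sch (t - k)) (sch (t - k)) else sch t.
exists sch', (k + t1); split=> [t kt|].
  by rewrite /sch' !ifF //; apply/negbTE; rewrite -leqNgt // (leq_trans (leq_addr _ _) kt).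
have [|t tt1|Hst _] := @simulates_run x val sch sch' t1 (sch 0) Hsch hx _ _ t1 (leqnn t1).
- by move=> i ik; rewrite /sch' ik.
- by rewrite /sch' ltn_add2l tt1 addKn ifF //; apply/negbTE; rewrite -leqNgt leq_addr.
- exact: Hst.
Qed.

End Step.

End Simulation.

Definition round_robin n M (n0 : 0 < n) (t : nat) : event n M :=
  Deliver M (Ordinal (ltn_pmod t n0)) (Ordinal (ltn_pmod (t %/ n) n0)).

Lemma eventually_round_robin_fair n adj S M (A : algorithm n S M) (n0 : 0 < n) F x sch T :
  (forall t, T <= t -> sch t = round_robin M n0 t) -> fair adj A F x sch.
Proof.
move=> Hsch t u v _ _; pose t0 := (T + t) * n + v.
have Hv := ltn_ord v; have Hu := ltn_ord u.
have le_t0 : (T + t) * n <= t0 by rewrite leq_addr.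
have le_n : T + t <= (T + t) * n by rewrite leq_pmulr.
have le_t0n : t0 <= t0 * n by rewrite leq_pmulr.
exists (t0 * n + u); split; first lia.
rewrite Hsch; last lia.
congr Deliver; apply: val_inj => /=; first by rewrite modnMDl modn_small.
by rewrite divnMDl // divn_small // addn0 modnMDl modn_small.
Qed.

Lemma round_robin_deliveries n M (n0 : 0 < n) : deliveries_only (round_robin M n0).
Proof. by move=> t; do 2 eexists. Qed.

Definition block n (lo hi : nat) : {set 'I_n} := [set i : 'I_n | lo <= i < hi].

Lemma card_block n lo hi : #|block n lo hi| <= hi - lo.
Proof.
rewrite cardE -(size_map val) -(size_iota lo (hi - lo)).
apply: uniq_leq_size; first by rewrite map_inj_uniq ?enum_uniq //; exact: val_inj.
move=> z /mapP[i]; rewrite mem_enum inE => /andP[lo_i i_hi] ->.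
by rewrite mem_iota lo_i /=; lia.
Qed.

Local Open Scope R_scope.

Lemma crashed_output_forced n adj S M (A : algorithm n S M) (n0 : (0 < n)%N)
    f L U eps (Bs Cs : {set 'I_n}) x val :
  irreflexive adj -> solves adj A f L U eps ->
  (#|Cs| <= f)%N -> L <= val <= U ->
  (forall a, a \notin Bs -> a \notin Cs -> x a = val) ->
  forall a t y, a \notin Bs -> a \notin Cs ->
  output_at adj A Bs x (round_robin M n0) t a = Some y -> y = val.
Proof.
move=> adj_irr Hsol cardC val_in hx a t y aB aC Hy.
have [sch' [T [HT Hst]]] :=
  crash_simulation A adj_irr t (round_robin_deliveries M n0) hx.
have fair' : fair adj A Cs (fun _ => val) sch' := eventually_round_robin_fair HT.
have [_ [_ valid]] := Hsol _ (fun _ => val_in) Cs cardC sch' fair'.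
have Hy' : output_at adj A Cs (fun _ => val) sch' T a = Some y by rewrite /output_at Hst.
by have [a' [b' [_ [_ ?]]]] := valid a T y aC Hy'; lra.
Qed.

Theorem theorem1 (n f : nat) (adj : rel 'I_n)
  (adj_sym : symmetric adj) (adj_irr : irreflexive adj)
  (f_pos : (0 < f)%N) (f_lt_n : (f < n)%N)
  (L U eps : R) (eps_pos : (0 < eps)%R) (eps_lt : (eps < U - L)%R) :
  (exists (S M : Type) (A : algorithm n S M), solves adj A f L U eps) ->
  (3 * f + 1 <= n)%N.
Proof.
move=> [S [M [A Hsol]]]; rewrite leqNgt; apply/negP => n_small.
have n0 : (0 < n)%N by apply: leq_ltn_trans f_lt_n.
pose As := block n 0 f; pose Cs := block n f (2 * f); pose Bs := block n (2 * f) n.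
have cardA : (#|As| <= f)%N by rewrite (leq_trans (card_block _ _ _)) ?subn0.
have cardC : (#|Cs| <= f)%N by rewrite (leq_trans (card_block _ _ _)) //; lia.
have cardB : (#|Bs| <= f)%N by rewrite (leq_trans (card_block _ _ _)) //; lia.
pose x i := if i \in Cs then U else L.
have x_in i : L <= x i <= U by rewrite /x; case: ifP; lra.
have fair0 : fair adj A Bs x (round_robin M n0).
  by apply: (eventually_round_robin_fair (T := 0)).
have [term [agree _]] := Hsol x x_in Bs cardB _ fair0.
pose a0 : 'I_n := Ordinal n0; pose c0 : 'I_n := Ordinal f_lt_n.
have [a0B a0C c0B c0A] : [/\ a0 \notin Bs, a0 \notin Cs, c0 \notin Bs & c0 \notin As].
  by rewrite !inE /=; split; lia.
have [ta [ya Hya]] := term a0 a0B; have [tc [yc Hyc]] := term c0 c0B.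
have ya_L : ya = L.
  apply: (crashed_output_forced adj_irr Hsol cardC _ _ a0B a0C Hya); first lra.
  by move=> a _ aC; rewrite /x (negbTE aC).
have yc_U : yc = U.
  apply: (crashed_output_forced adj_irr Hsol cardA _ _ c0B c0A Hyc); first lra.
  move=> a aB aA; rewrite /x ifT //; move: aB aA; rewrite !inE; have := ltn_ord a; lia.
have := agree _ _ _ _ _ _ a0B c0B Hya Hyc.
by rewrite ya_L yc_U Rabs_minus_sym Rabs_right; lra.
Qed.
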